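(* Let $n$ be even, $k\ge1$, $q=2^k$, and $f(x)=a_0(x)+2a_1(x)+\cdots+2^{k-1}a_{k-1}(x)$ from $\mathbb{V}_n$ to $\mathbb{Z}_{2^k}$ with Boolean $a_j$. Then $f$ is $\mathbb{Z}_q$-bent if and only if for every $t=0,1,\ldots,k-1$ the function $f_t(x)=a_0(x)+2a_1(x)+\cdots+2^{k-t-1}a_{k-t-1}(x)$, regarded as a function from $\mathbb{V}_n$ to $\mathbb{Z}_{2^{k-t}}$, is gbent.
   Context: $\mathbb{V}_n$ is an $n$-dimensional $\mathbb{F}_2$-vector space with inner product $u\cdot x$. For $g:\mathbb{V}_n\to\mathbb{Z}_{2^m}$, $g$ is gbent if $|\sum_x\zeta_{2^m}^{g(x)}(-1)^{u\cdot x}|=2^{n/2}$ for all $u$, $\zeta_{2^m}=e^{2\pi i/2^m}$ (for $m=1$ this is ordinary bentness). $f:\mathbb{V}_n\to\mathbb{Z}_q$ is $\mathbb{Z}_q$-bent if $|\sum_{x\in\mathbb{V}_n}\zeta_q^{af(x)}(-1)^{u\cdot x}|=2^{n/2}$ for every $u\in\mathbb{V}_n$ and every nonzero $a\in\mathbb{Z}_q$. *)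

From HB Require Import structures.
From mathcomp Require Import all_boot all_order all_algebra.
From mathcomp Require Import complex.
From mathcomp Require Import reals trigo Rstruct.
Set Implicit Arguments. Unset Strict Implicit. Unset Printing Implicit Defensive.
Import Order.TTheory GRing.Theory Num.Theory.
Local Open Scope ring_scope.

Definition Rr : realType := Rdefinitions.R.
Definition Cx : numClosedFieldType := (Rr[i])%C.

Definition V (n : nat) := 'rV['F_2]_n.

Definition dotb (n : nat) (u x : V n) : bool := ((u *m x^T) 0 0 == 1).

Definition zeta (N : nat) : Cx :=
  (Complex (cos (2 * pi / N%:R)) (sin (2 * pi / N%:R)) : Rr[i])%C.

(* Sum_x zeta_N^{h(x)} (-1)^{u.x}, for h with values in Z_N (represented by nat;
   only h(x) mod N matters since zeta_N^N = 1). *)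
Definition walsh (n N : nat) (h : V n -> nat) (u : V n) : Cx :=
  \sum_(x : V n) zeta N ^+ h x * (-1) ^+ dotb u x.

Definition two_pow_half (n : nat) : Cx := ((Num.sqrt (2 : Rr)) ^+ n)%:C%C.

Definition gbent (n m : nat) (g : V n -> nat) : Prop :=
  forall u : V n, `|walsh (2 ^ m) g u| = two_pow_half n.

Definition Zq_bent (n q : nat) (f : V n -> nat) : Prop :=
  forall (u : V n) (a : 'I_q), a != 0 :> nat ->
    `|walsh q (fun x => a * f x)%N u| = two_pow_half n.

(* f_t(x) = a_0(x) + 2 a_1(x) + ... + 2^{k-t-1} a_{k-t-1}(x), with Boolean a_j;
   with t = 0 this is f itself. *)
Definition trunc_fun (n k t : nat) (a : nat -> V n -> bool) : V n -> nat :=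
  fun x => (\sum_(j < k - t) 2 ^ j * a j x)%N.

(* Let z be a root of z^M = -1 with M = 2^e.  The squared modulus of
   sum_x z^(h x) (-1)^(u.x) is an integer combination sum_(j < M) D_j z^j whose
   coefficients D_j do not depend on z, and 1, z, ..., z^(M-1) are linearly
   independent over Q because X^M + 1 is irreducible (Eisenstein at 2 after
   X |-> X + 1).  So the modulus is 2^(n/2) iff D_j = 2^n [j = 0], a condition
   that is the same for all such z.  Writing a nonzero a in Z_(2^k) as b 2^t
   with b odd, zeta_(2^k)^(a f) = (zeta_(2^(k-t))^b)^(f_t), and zeta_(2^(k-t))^b
   is another root of z^(2^(k-t-1)) = -1; hence Z_q-bentness of f at a is
   gbentness of f_t. *)

From mathcomp Require Import all_boot all_order all_algebra.
From mathcomp Require Import complex reals trigo Rstruct ring.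

Set Implicit Arguments. Unset Strict Implicit. Unset Printing Implicit Defensive.
Import Order.TTheory GRing.Theory Num.Theory.
Local Open Scope ring_scope.

Lemma irreducible_common_root_size (F : numFieldType) (p q : {poly int}) (x : F) :
  irreducible_poly p -> root (map_poly intr p) x -> root (map_poly intr q) x ->
  q != 0 -> (size p <= size q)%N.
Proof.
move=> p_irr px qx q_neq0.
have ratrK (r : {poly int}) : map_poly (ratr : rat -> F) (map_poly intr r) = map_poly intr r.
  by rewrite -map_poly_comp; apply: eq_map_poly => c /=; rewrite ratr_int.
have pQ_irr : irreducible_poly (map_poly (intr : int -> rat) p).
  exact/irreducible_rat_int.
have : ~~ coprimep (map_poly (intr : int -> rat) p) (map_poly intr q).
  rewrite -(coprimep_map (ratr : {rmorphism rat -> F})) !ratrK.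
  by apply: contraL qx => /coprimep_root/(_ px).
rewrite irreducible_poly_coprime // negbK => /dvdp_leq.
by rewrite !size_rat_int_poly; apply; rewrite -size_poly_eq0 size_rat_int_poly size_poly_eq0.
Qed.

(* (X^M + 1) \Po (X + 1): its roots are the z - 1 with z^M = -1. *)
Definition XnD1_shift (M : nat) : {poly int} := ('X + 1) ^+ M + 1.

Lemma size_XaddC1_exp M : size (('X + 1) ^+ M : {poly int}) = M.+1.
Proof. by rewrite -(opprK 1) -polyC1 -polyCN size_exp_XsubC. Qed.

Lemma size_XnD1_shift M : (0 < M)%N -> size (XnD1_shift M) = M.+1.
Proof. by move=> M_gt0; rewrite size_polyDl size_XaddC1_exp // size_poly1. Qed.

Lemma XnD1_shift_even_coef e i : (i < 2 ^ e)%N -> (2 %| (XnD1_shift (2 ^ e))`_i)%Z.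
Proof.
move=> lt_iM; rewrite (dvdz_pcharf (pchar_Fp (isT : prime 2))).
have chF2X : 2%N \in [pchar {poly 'F_2}] by rewrite pchar_poly pchar_Fp.
suff F2E : map_poly (intr : int -> 'F_2) (XnD1_shift (2 ^ e)) = 'X^(2 ^ e).
  by rewrite -coef_map F2E coefXn ltn_eqF.
rewrite rmorphD rmorphXn /= rmorphD /= map_polyX rmorph1 exprDn_pchar.
  by rewrite expr1n -addrA -mulr2n (pcharf0 chF2X) addr0.
by rewrite pnatX (pnatE _ (isT : prime 2)) chF2X.
Qed.

Lemma XnD1_shift_irreducible e : irreducible_poly (XnD1_shift (2 ^ e)).
Proof.
have M_gt0 : (0 < 2 ^ e)%N by rewrite expn_gt0.
apply: (@eisenstein_crit 2) => //.
- by rewrite size_XnD1_shift // eqSS -lt0n.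
- rewrite lead_coefDl ?size_XaddC1_exp ?size_poly1 //.
  by rewrite (monicP (monic_exp _ (monicXaddC 1))).
- by rewrite -horner_coef0 /XnD1_shift !hornerE expr1n.
- by move=> i; rewrite size_XnD1_shift //= => /XnD1_shift_even_coef.
Qed.

Lemma root_of_neg1_powers_free (F : numFieldType) e (z : F) (d : nat -> int) :
  z ^+ (2 ^ e) = -1 -> \sum_(j < 2 ^ e) (d j)%:~R * z ^+ j = 0 ->
  forall j, (j < 2 ^ e)%N -> d j = 0.
Proof.
move=> zM dz0 j lt_jM.
have M_gt0 : (0 < 2 ^ e)%N by rewrite expn_gt0.
pose r : {poly int} := \poly_(j < 2 ^ e) d j.
suff r0 : r = 0 by have := congr1 (coefp j) r0; rewrite /= coef0 coef_poly lt_jM.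
apply/eqP; apply: contraT => r_neq0.
pose r1 := r \Po ('X + 1).
have size_r1 : size r1 = size r by rewrite size_comp_poly2 // size_XaddC.
have rz : (map_poly intr r).[z] = 0 :> F.
  rewrite -dz0 -(horner_poly _ (fun j => (d j)%:~R)); congr horner; apply/polyP => i.
  by rewrite coef_map !coef_poly; case: ifP.
have := @irreducible_common_root_size F _ r1 (z - 1) (XnD1_shift_irreducible e).
rewrite size_XnD1_shift // size_r1 leqNgt ltnS size_poly; apply.
- rewrite /root /XnD1_shift rmorphD rmorphXn /= rmorphD /= map_polyX !rmorph1.
  by rewrite !hornerE subrK zM addNr.
- rewrite /root /r1 map_comp_poly horner_comp rmorphD /= map_polyX rmorph1.
  by rewrite !hornerE subrK rz.
- by rewrite -size_poly_eq0 size_r1 size_poly_eq0.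
Qed.

Definition expi (t : Rr) : Cx := (Complex (cos t) (sin t) : Rr[i])%C.

Lemma expiD a b : expi a * expi b = expi (a + b).
Proof.
rewrite /expi trigo.cosD trigo.sinD; apply/eqP; rewrite eq_complex /=.
by rewrite [sin a * cos b + _]addrC !eqxx.
Qed.

Lemma expiMn t j : expi t ^+ j = expi (j%:R * t).
Proof.
elim: j => [|j IHj]; first by rewrite mul0r /expi trigo.cos0 trigo.sin0.
by rewrite exprS IHj expiD -[j.+1]addn1 natrD mulrDl mul1r addrC.
Qed.

Lemma zetaM_expr d N : (0 < d)%N -> zeta (d * N) ^+ d = zeta N.
Proof.
move=> d_gt0; rewrite /zeta -/(expi _) expiMn natrM; congr expi.
have d_neq0 : d%:R != 0 :> Rr by rewrite pnatr_eq0 -lt0n.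
have [->|N_neq0] := eqVneq N%:R (0 : Rr); first by rewrite mulr0 !invr0 !mulr0.
by field; rewrite d_neq0 N_neq0.
Qed.

Lemma zeta1 : zeta 1 = 1.
Proof.
rewrite /zeta divr1 mulr_natl trigo.cos2pi trigo.sin2pi; reflexivity.
Qed.

Lemma zeta2 : zeta 2 = -1.
Proof.
rewrite /zeta -/(expi _) (_ : 2 * pi / 2%:R = pi); last by field.
rewrite /expi trigo.cospi trigo.sinpi.
by apply/eqP; rewrite eq_complex /= oppr0 !eqxx.
Qed.

Lemma zeta_exprn N : (0 < N)%N -> zeta N ^+ N = 1.
Proof. by move=> N_gt0; rewrite -{1}(muln1 N) zetaM_expr // zeta1. Qed.

Lemma zeta_pow2_expr k t : (t <= k)%N -> zeta (2 ^ k) ^+ (2 ^ t) = zeta (2 ^ (k - t)).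
Proof. by move=> le_tk; rewrite -(subnKC le_tk) expnD addKn zetaM_expr ?expn_gt0. Qed.

Lemma zeta_pow2_half s : zeta (2 ^ s.+1) ^+ (2 ^ s) = -1.
Proof. by rewrite -[s.+1]add1n zeta_pow2_expr ?leq_addl // addnK zeta2. Qed.

Lemma sum_sign_pow_neg1_root (R : pzRingType) (I : finType) (s m : I -> nat) M (z : R) :
  (0 < M)%N -> z ^+ M = -1 ->
  \sum_i (-1) ^+ s i * z ^+ m i =
  \sum_(j < M) (\sum_(i | (m i %% M)%N == j) (-1) ^+ (s i + m i %/ M)%N : int)%:~R * z ^+ j.
Proof.
move=> M_gt0 zM.
rewrite (partition_big (fun i => Ordinal (ltn_pmod (m i) M_gt0)) xpredT) //=.
apply: eq_bigr => j _; rewrite rmorph_sum mulr_suml; apply: eq_big => [//|i /eqP <-] /=.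
rewrite {1}(divn_eq (m i) M) exprD mulnC exprM zM rmorphXn rmorphN1 exprD.
by rewrite mulrA.
Qed.

Lemma conjC_unity_root (C : numClosedFieldType) (z : C) N :
  (0 < N)%N -> z ^+ N = 1 -> z^* = z ^+ N.-1.
Proof.
move=> N_gt0 zN.
have z_neq0 : z != 0.
  by apply: contra_eq_neq zN => ->; rewrite expr0n gtn_eqF // eq_sym oner_neq0.
have normz : `|z| = 1 by apply/eqP; rewrite -(pexpr_eq1 N_gt0) // -normrX zN normr1.
by apply: (mulfI z_neq0); rewrite -normCK normz expr1n -exprS prednK.
Qed.

Section WalshAt.

Variables (C : numClosedFieldType) (n : nat).
Implicit Types (z : C) (h : V n -> nat) (u : V n).

(* [walsh N] is [walsh_at (zeta N)] by definition. *)
Definition walsh_at z h u : C := \sum_(x : V n) z ^+ h x * (-1) ^+ dotb u x.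

Lemma eq_walsh_at_mod z N h1 h2 u : z ^+ N = 1 ->
  (forall x, h1 x = h2 x %[mod N]) -> walsh_at z h1 u = walsh_at z h2 u.
Proof.
by move=> zN h12; apply: eq_bigr => x _; rewrite -(expr_mod _ zN) h12 expr_mod.
Qed.

(* z^(h x) * (z^(h y))^* = z^(corr_exp M h (x, y)) when z^(2M) = 1. *)
Definition corr_exp M h (p : V n * V n) : nat := (h p.1 + (M.*2).-1 * h p.2)%N.

Definition corr_coef M h u j : int :=
  \sum_(p : V n * V n | (corr_exp M h p %% M)%N == j)
    (-1) ^+ (dotb u p.1 + dotb u p.2 + corr_exp M h p %/ M)%N.

Lemma walsh_at_normCK z M h u : (0 < M)%N -> z ^+ M = -1 ->
  `|walsh_at z h u| ^+ 2 = \sum_(j < M) (corr_coef M h u j)%:~R * z ^+ j.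
Proof.
move=> M_gt0 zM.
transitivity (\sum_(p : V n * V n)
  (-1) ^+ (dotb u p.1 + dotb u p.2)%N * z ^+ corr_exp M h p); last first.
  exact: sum_sign_pow_neg1_root.
have zJ : z^* = z ^+ (M.*2).-1.
  by apply: conjC_unity_root; rewrite ?double_gt0 // -addnn exprD zM mulrNN mulr1.
rewrite normCK /walsh_at rmorph_sum mulr_suml.
under eq_bigr do rewrite mulr_sumr.
rewrite pair_big /=; apply: eq_bigr => p _.
rewrite rmorphM !rmorphXn /= rmorphN1 zJ -exprM /corr_exp !exprD.
by rewrite mulrACA mulrC.
Qed.

End WalshAt.

Lemma two_pow_half_ge0 n : 0 <= two_pow_half n.
Proof. by rewrite /two_pow_half ler0c exprn_ge0 ?sqrtr_ge0. Qed.

Lemma two_pow_half_sqr n : two_pow_half n ^+ 2 = (2 ^ n)%:R.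
Proof.
rewrite /two_pow_half -rmorphXn /= -exprM mulnC exprM sqr_sqrtr ?ler0n //.
by rewrite natrX rmorphXn /= rmorph_nat.
Qed.

Lemma norm_walsh_at_eq_two_pow_half n e (z : Cx) (h : V n -> nat) (u : V n) :
  z ^+ (2 ^ e) = -1 ->
  `|walsh_at z h u| = two_pow_half n <->
  (forall j, (j < 2 ^ e)%N -> corr_coef (2 ^ e) h u j = ((j == 0%N) * 2 ^ n)%N).
Proof.
move=> zM; have M_gt0 : (0 < 2 ^ e)%N by rewrite expn_gt0.
pose delta j : int := ((j == 0%N) * 2 ^ n)%N.
have sum_delta : \sum_(j < 2 ^ e) (delta j)%:~R * z ^+ j = (2 ^ n)%:R.
  rewrite (bigD1 (Ordinal M_gt0)) //= big1 => [|j j_neq0]; last first.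
    by rewrite /delta (_ : (j == 0 :> nat) = false) ?mul0r //; apply: negbTE.
  by rewrite addr0 mulr1 /delta /= mul1n.
transitivity (`|walsh_at z h u| ^+ 2 = two_pow_half n ^+ 2).
  split=> [-> // | /eqP]; rewrite eqrXn2 ?normr_ge0 ?two_pow_half_ge0 //.
  by move/eqP.
rewrite (walsh_at_normCK _ _ M_gt0 zM) two_pow_half_sqr -sum_delta.
split=> [eq_sums | eq_coef]; last by apply: eq_bigr => j _; rewrite eq_coef.
move=> j lt_jM; apply/eqP; rewrite -subr_eq0; apply/eqP; move: j lt_jM.
apply: (root_of_neg1_powers_free (d := fun j => corr_coef _ h u j - delta j) zM).
by under eq_bigr do rewrite rmorphB mulrBl; rewrite sumrB eq_sums subrr.
Qed.

Lemma sum_expn_digits_mod p (b : nat -> nat) j m : (j <= m)%N ->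
  (\sum_(i < m) p ^ i * b i = \sum_(i < j) p ^ i * b i %[mod p ^ j])%N.
Proof.
move=> le_jm; rewrite -!(big_mkord xpredT (fun i => p ^ i * b i)%N).
rewrite (big_cat_nat (leq0n j) le_jm) /=.
rewrite -modnDmr (eqP (_ : p ^ j %| \sum_(j <= i < m) p ^ i * b i)%N) ?addn0 //.
rewrite big_nat_cond; apply: dvdn_sum => i /andP[/andP[le_ji _] _].
by rewrite dvdn_mulr // dvdn_exp2l.
Qed.

Lemma trunc_fun_mod n k t (a : nat -> V n -> bool) x : (t <= k)%N ->
  (trunc_fun k 0 a x = trunc_fun k t a x %[mod 2 ^ (k - t)])%N.
Proof.
by move=> le_tk; rewrite /trunc_fun subn0 (sum_expn_digits_mod 2 (fun i => a i x)) ?leq_subr.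
Qed.

Lemma walsh_trunc_fun n k t b c (a : nat -> V n -> bool) u : (t <= k)%N ->
  c = (b * 2 ^ t)%N ->
  walsh (2 ^ k) (fun x => c * trunc_fun k 0 a x)%N u =
  walsh_at (zeta (2 ^ (k - t)) ^+ b) (trunc_fun k t a) u.
Proof.
move=> le_tk ->; transitivity (walsh_at (zeta (2 ^ (k - t)) ^+ b) (trunc_fun k 0 a) u).
  by apply: eq_bigr => x _; rewrite exprM mulnC exprM zeta_pow2_expr.
apply: eq_walsh_at_mod (fun x => trunc_fun_mod a x le_tk).
by rewrite exprAC zeta_exprn ?expn_gt0 ?expr1n.
Qed.

Theorem proposition5 (n k : nat) (a : nat -> V n -> bool) :
  ~~ odd n -> (1 <= k)%N ->
  Zq_bent (2 ^ k) (trunc_fun k 0 a) <->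
  (forall t : nat, (t < k)%N -> gbent (k - t) (trunc_fun k t a)).
Proof.
move=> _ k_gt0; split=> [bent_f t lt_tk u | bent_ft u c c_neq0].
  have lt_2t_2k : (2 ^ t < 2 ^ k)%N by rewrite ltn_exp2l.
  have := bent_f u (Ordinal lt_2t_2k); rewrite expn_eq0 /= => /(_ isT).
  by rewrite (@walsh_trunc_fun _ k t 1) ?mul1n ?expr1 // ltnW.
have c_gt0 : (0 < c)%N by rewrite lt0n.
have [b odd_b c_eq] := pfactor_coprime (isT : prime 2) c_gt0.
rewrite coprime2n in odd_b; set t := logn 2 c in c_eq.
have lt_tk : (t < k)%N.
  rewrite -(@ltn_exp2l 2) //; apply: leq_ltn_trans (ltn_ord c).
  by rewrite c_eq leq_pmull // odd_gt0.
rewrite (walsh_trunc_fun _ _ (ltnW lt_tk) c_eq).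
have [s k_t] : exists s, (k - t)%N = s.+1 by exists (k - t.+1)%N; rewrite subnSK.
have zeta_half := zeta_pow2_half s; rewrite -k_t in zeta_half.
have zeta_b_half : (zeta (2 ^ (k - t)) ^+ b) ^+ (2 ^ s) = -1.
  by rewrite exprAC zeta_half -signr_odd odd_b expr1.
apply/(norm_walsh_at_eq_two_pow_half _ _ zeta_b_half).
apply/(norm_walsh_at_eq_two_pow_half _ _ zeta_half).
exact: bent_ft.
Qed.
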